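(* Let $X$ be a real Banach space, let $A\subset X\times X^*$ be self-cancelling and suppose that $A^\vdash$ is maximal monotone. Then for any $(x_0,x_0^* )\in X\times X^*$ the operator $T=A^\vdash+\{(x_0,x_0^* )\}=\{(y+x_0,y^*+x_0^* )\mid (y,y^* )\in A^\vdash\}$ is non-enlargeable; equivalently, $\{(x,x^* )\mid \varphi_T(x,x^* )<\infty\}=T$.
   Context: $\langle x,x^*\rangle=x^*(x)$. Operators $X\rightrightarrows X^*$ are subsets of $X\times X^*$; monotone means $\langle x-y,x^*-y^*\rangle\ge0$ on pairs in the operator, maximal monotone means monotone and maximal under inclusion among monotone operators. $A$ is self-cancelling if it is a linear subspace of $X\times X^*$ with $\langle x,x^*\rangle=0$ for all $(x,x^* )\in A$. $B^\vdash=\{(y,y^* )\mid \langle x,y^*\rangle+\langle y,x^*\rangle=0\ \forall (x,x^* )\in B\}$. For maximal monotone $T$ and $\varepsilon\ge0$, $T^\varepsilon=\{(x,x^* )\mid \langle x-y,x^*-y^*\rangle\ge-\varepsilon\ \forall (y,y^* )\in T\}$, and $T$ is non-enlargeable if $T^\varepsilon=T$ for all $\varepsilon\ge0$. The Fitzpatrick function is $\varphi_T(x,x^* )=\sup_{(y,y^* )\in T}\big(\langle x,y^*\rangle+\langle y,x^*\rangle-\langle y,y^*\rangle\big)$. *)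

From HB Require Import structures.
From mathcomp Require Import all_boot all_order all_algebra.
From mathcomp Require Import all_classical all_reals all_analysis.
Set Implicit Arguments. Unset Strict Implicit. Unset Printing Implicit Defensive.
Import Order.TTheory GRing.Theory Num.Theory.
Import numFieldNormedType.Exports.
Local Open Scope classical_set_scope.
Local Open Scope ring_scope.

(* Topological dual X^* of a real normed space X: continuous linear functionals,
   represented as functions X -> R; the pairing <x,x*> is x* x. *)
Definition dualsp (R : realType) (X : normedModType R) : set (X -> R) :=
  [set f | (forall (a : R) (x y : X), f (a *: x + y) = a * f x + f y) /\ continuous f].

(* An operator X ⇉ X^* is a subset of X × X^*. *)
Definition in_XXs (R : realType) (X : normedModType R) (T : set (X * (X -> R))) :=
  forall p, T p -> dualsp p.2.

Definition monotone_op (R : realType) (X : normedModType R) (T : set (X * (X -> R))) :=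
  in_XXs T /\
  forall p q, T p -> T q -> 0 <= p.2 (p.1 - q.1) - q.2 (p.1 - q.1).

Definition maximal_monotone (R : realType) (X : normedModType R)
  (T : set (X * (X -> R))) :=
  monotone_op T /\ forall S, monotone_op S -> T `<=` S -> S = T.

Definition self_cancelling (R : realType) (X : normedModType R)
  (A : set (X * (X -> R))) :=
  [/\ in_XXs A, A (0, fun _ => 0),
      (forall p q, A p -> A q -> A (p.1 + q.1, fun z => p.2 z + q.2 z)),
      (forall (a : R) p, A p -> A (a *: p.1, fun z => a * p.2 z)) &
      (forall p, A p -> p.2 p.1 = 0)].

Definition perp_op (R : realType) (X : normedModType R) (B : set (X * (X -> R))) :
  set (X * (X -> R)) :=
  [set q | dualsp q.2 /\ forall p, B p -> q.2 p.1 + p.2 q.1 = 0].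

Definition translate_op (R : realType) (X : normedModType R) (B : set (X * (X -> R)))
  (x0 : X) (x0s : X -> R) : set (X * (X -> R)) :=
  [set r | exists q, B q /\ r = (q.1 + x0, fun z => q.2 z + x0s z)].

Definition enlargement (R : realType) (X : normedModType R) (T : set (X * (X -> R)))
  (eps : R) : set (X * (X -> R)) :=
  [set p | dualsp p.2 /\
           forall q, T q -> - eps <= p.2 (p.1 - q.1) - q.2 (p.1 - q.1)].

Definition non_enlargeable (R : realType) (X : normedModType R) (T : set (X * (X -> R))) :=
  forall eps : R, 0 <= eps -> enlargement T eps = T.

Definition fitzpatrick (R : realType) (X : normedModType R) (T : set (X * (X -> R)))
  (p : X * (X -> R)) : \bar R :=
  ereal_sup [set ((q.2 p.1 + p.2 q.1 - q.2 q.1)%:E) | q in T].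

(* Let T = A^⊢ + (x0, x0* ) and let (x, x* ) satisfy <x - y, x* - y*> >= -eps
   for all (y, y* ) in T.  Testing against the points (x0 - t a, x0* - t a* ) of
   T, where (a, a* ) ∈ A ⊆ A^⊢, gives -eps <= c + t s for all real t, with c
   independent of t, because the quadratic term t^2 <a, a*> vanishes; hence the
   slope s = <x - x0, a*> + <a, x* - x0*> is zero, i.e. (x, x* ) ∈ T.
   Finiteness of the Fitzpatrick function at p puts p in some enlargement of T,
   and monotonicity of T gives the reverse inclusions. *)
From HB Require Import structures.
From mathcomp Require Import all_boot all_order all_algebra.
From mathcomp Require Import all_classical all_reals all_analysis.
From mathcomp Require Import ring lra.
Import Order.TTheory GRing.Theory Num.Theory.
Local Open Scope classical_set_scope.
Local Open Scope ring_scope.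

Section Dual.
Context {R : realType} {X : normedModType R}.
Implicit Types (f g : X -> R) (x y : X).

Lemma dualsp0 {f} : dualsp f -> f 0 = 0.
Proof.
move=> [f_lin _]; have := f_lin 1 0 0; rewrite scaler0 addr0 mul1r => /eqP.
by rewrite -subr_eq0 opprD addrA subrr add0r oppr_eq0 => /eqP.
Qed.

Lemma dualspD {f x y} : dualsp f -> f (x + y) = f x + f y.
Proof. by move=> [f_lin _]; have := f_lin 1 x y; rewrite scale1r mul1r. Qed.

Lemma dualspZ {f a x} : dualsp f -> f (a *: x) = a * f x.
Proof. by move=> df; have := (proj1 df) a x 0; rewrite !addr0 (dualsp0 df) addr0. Qed.

Lemma dualspB {f x y} : dualsp f -> f (x - y) = f x - f y.
Proof. by move=> df; rewrite (dualspD df) -scaleN1r (dualspZ df); ring. Qed.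

Lemma dualsp_add f g : dualsp f -> dualsp g -> dualsp (fun z => f z + g z).
Proof.
move=> df dg; split; first by move=> a x y; rewrite (proj1 df) (proj1 dg); ring.
by move=> x; exact: (continuousD (proj2 df x) (proj2 dg x)).
Qed.

Lemma dualsp_sub f g : dualsp f -> dualsp g -> dualsp (fun z => f z - g z).
Proof.
move=> df dg; split; first by move=> a x y; rewrite (proj1 df) (proj1 dg); ring.
by move=> x; exact: (continuousB (proj2 df x) (proj2 dg x)).
Qed.

End Dual.

Lemma affine_lbound_slope0 (R : realFieldType) (K c s : R) :
  (forall t, K <= c + t * s) -> s = 0.
Proof.
move=> lb; have [//|s_neq0] := eqVneq s 0.
have := lb ((K - c - 1) / s); rewrite divfK // => bound.
suff : (0 < 0 :> R) by rewrite ltxx.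
lra.
Qed.

Section Enlargement.
Context {R : realType} {X : normedModType R}.
Implicit Types (T : set (X * (X -> R))) (p : X * (X -> R)).

Lemma monotone_sub_enlargement T eps :
  monotone_op T -> 0 <= eps -> T `<=` enlargement T eps.
Proof.
move=> [T_dual T_mon] eps_ge0 p Tp; split; first exact: T_dual.
by move=> q Tq; have := T_mon _ _ Tp Tq; lra.
Qed.

Lemma non_enlargeableP T :
  monotone_op T -> (forall eps, enlargement T eps `<=` T) -> non_enlargeable T.
Proof.
move=> monT enlT eps eps_ge0; apply/seteqP; split; first exact: enlT.
exact: monotone_sub_enlargement.
Qed.

Lemma fitzpatrick_le_pairing {T p} : monotone_op T -> T p ->
  (fitzpatrick T p <= (p.2 p.1)%:E)%E.
Proof.
move=> [T_dual T_mon] Tp; apply: ge_ereal_sup => _ [q Tq <-].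
have := T_mon _ _ Tp Tq.
by rewrite lee_fin !(dualspB (T_dual _ Tp)) !(dualspB (T_dual _ Tq)); lra.
Qed.

Lemma fitzpatrick_le_enlargement {T p} {M : R} :
  in_XXs T -> dualsp p.2 -> (fitzpatrick T p <= M%:E)%E ->
  enlargement T (M - p.2 p.1) p.
Proof.
move=> T_dual dp fitzM; split => // q Tq.
have : ((q.2 p.1 + p.2 q.1 - q.2 q.1)%:E <= M%:E)%E.
  by apply: le_trans fitzM; apply: ereal_sup_ubound; exists q.
by rewrite lee_fin !(dualspB dp) !(dualspB (T_dual _ Tq)); lra.
Qed.

Lemma fitzpatrick_dom T : monotone_op T -> (forall eps, enlargement T eps `<=` T) ->
  [set p | dualsp p.2 /\ (fitzpatrick T p < +oo)%E] = T.
Proof.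
move=> monT enlT; apply/seteqP; split => p.
  move=> [dp fitz_fin]; have [M fitzM] : exists M : R, (fitzpatrick T p <= M%:E)%E.
    move: fitz_fin; case: (fitzpatrick T p) => [r _| //|_]; first by exists r.
    by exists 0; rewrite leNye.
  exact: enlT (fitzpatrick_le_enlargement (proj1 monT) dp fitzM).
move=> Tp; split; first exact: (proj1 monT).
exact: le_lt_trans (fitzpatrick_le_pairing monT Tp) (ltry _).
Qed.

End Enlargement.

Section TranslatedPerp.
Context {R : realType} {X : normedModType R}.
Context {x0 : X} {x0s : X -> R}.
Hypothesis dx0s : dualsp x0s.

Lemma translate_op_monotone {B} : monotone_op B -> monotone_op (translate_op B x0 x0s).
Proof.
move=> [B_dual B_mon]; split.
  by move=> _ [b [Bb ->]]; exact: dualsp_add (B_dual _ Bb) dx0s.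
move=> _ _ [b [Bb ->]] [c [Bc ->]] /=.
have -> : b.1 + x0 - (c.1 + x0) = b.1 - c.1 by rewrite opprD addrACA subrr addr0.
by have := B_mon _ _ Bb Bc; lra.
Qed.

Context {A : set (X * (X -> R))}.
Hypothesis scA : self_cancelling A.

Lemma self_cancelling_sub_perp : A `<=` perp_op A.
Proof.
case: scA => A_dual _ A_add _ A_iso a Aa; split; first exact: A_dual.
move=> p Ap; have := A_iso _ (A_add _ _ Aa Ap) => /=.
rewrite (dualspD (A_dual _ Aa)) (dualspD (A_dual _ Ap)).
by rewrite (A_iso _ Aa) (A_iso _ Ap); lra.
Qed.

Lemma enlargement_translate_perp_sub eps :
  enlargement (translate_op (perp_op A) x0 x0s) eps `<=`
  translate_op (perp_op A) x0 x0s.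
Proof.
move=> p [dp p_enl]; case: scA => A_dual _ _ A_scale A_iso.
suff perp_p : perp_op A (p.1 - x0, fun z => p.2 z - x0s z).
  exists (p.1 - x0, fun z => p.2 z - x0s z); split => //.
  case: p {dp p_enl perp_p} => p1 p2 /=.
  by rewrite subrK; congr pair; apply: funext => z; rewrite subrK.
split; first exact: dualsp_sub.
move=> a Aa /=; have da := A_dual _ Aa.
apply: (@affine_lbound_slope0 _ (- eps) (p.2 p.1 - p.2 x0 - x0s p.1 + x0s x0)) => t.
have := p_enl _ (ex_intro _ _ (conj (self_cancelling_sub_perp _ (A_scale (- t) _ Aa)) erefl)) => /=.
rewrite !(dualspB dp) !(dualspD dp) !(dualspZ dp).
rewrite !(dualspB dx0s) !(dualspD dx0s) !(dualspZ dx0s).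
rewrite !(dualspB da) !(dualspD da) !(dualspZ da) (A_iso _ Aa).
lra.
Qed.

End TranslatedPerp.

Theorem lemma3 (R : realType) (X : completeNormedModType R)
  (A : set (X * (X -> R))) (x0 : X) (x0s : X -> R) :
  self_cancelling A ->
  maximal_monotone (perp_op A) ->
  dualsp x0s ->
  non_enlargeable (translate_op (perp_op A) x0 x0s) /\
  [set p | dualsp p.2 /\
           (fitzpatrick (translate_op (perp_op A) x0 x0s) p < +oo)%E]
  = translate_op (perp_op A) x0 x0s.
Proof.
move=> scA [mon_perp _] dx0s.
have monT := translate_op_monotone dx0s mon_perp.
have enlT := enlargement_translate_perp_sub dx0s scA.
by split; [exact: non_enlargeableP | exact: fitzpatrick_dom].
Qed.
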